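(* Let $\mathfrak a$ be a skew-symmetric invariant $n$-ary algebra which is irreducible but not simple, and let $\mathfrak i$ be a maximal non-trivial ideal of $\mathfrak a$ of codimension $1$. Then $\mathfrak a$ is isomorphic to a certain double extension (generalized double extension of some $\mathfrak g$ by some one-dimensional $\mathfrak h$ via $\psi_1,\dots,\psi_{n+1}$) with $\nu=0$ and $\psi_i=0$ for all $i\neq1$.
   Context: A skew-symmetric invariant $n$-ary algebra is a commutative invariant $n$-ary superalgebra whose underlying superspace is purely odd; concretely, a finite-dimensional vector space over $\mathbb K=\mathbb R$ or $\mathbb C$ with a non-degenerate symmetric bilinear form $(\,,)$ and a skew-symmetric $n$-linear map $\{\,\}$ satisfying $(a_0,\{a_1,\dots,a_n\})=-(a_1,\{a_0,a_2,\dots,a_n\})$. (In general: a commutative $n$-ary superalgebra satisfies $\{\dots,a_i,a_{i+1},\dots\}=(-1)^{\bar a_i\bar a_{i+1}}\{\dots,a_{i+1},a_i,\dots\}$, and invariance with respect to an even super-skew-symmetric form, $(a,b)=-(-1)^{\bar a\bar b}(b,a)$, means $(a_0,\{a_1,\dots,a_n\})=(-1)^{\bar a_0\bar a_1}(a_1,\{a_0,a_2,\dots,a_n\})$.) Ideal: subspace $\mathfrak i$ with $\{\mathfrak a,\dots,\mathfrak a,\mathfrak i\}\subset\mathfrak i$. Simple: not trivial one-dimensional and no proper ideals. Irreducible: not a direct sum of two ideals on which the form is non-degenerate. Derived potential: $S^*V$ (super-symmetric algebra of a superspace $V$ with such a form) carries the Poisson bracket with $[x,y]=(x,y)$ on $V$,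 $[v,w_1w_2]=[v,w_1]w_2+(-1)^{\bar v\bar w_1}w_1[v,w_2]$, $[v,w]=-(-1)^{\bar v\bar w}[w,v]$; every commutative invariant $n$-ary superalgebra on $V$ is $\{a_1,\dots,a_n\}=[a_1,[\dots,[a_n,\mu]\dots]]$ for some $\mu\in S^{n+1}V$ (its derived potential). Generalized double extension: given a commutative invariant $n$-ary superalgebra $\mathfrak g$ with derived potential $\mu\in S^{n+1}\mathfrak g$ and a commutative $n$-ary superalgebra $\mathfrak h$ with multiplication $\nu\in S^n\mathfrak h^*\otimes\mathfrak h\cong S^n\mathfrak h^*\cdot\mathfrak h\subset S^*(\mathfrak h\oplus\mathfrak h^* )$, where $\mathfrak h\oplus\mathfrak h^*$ has the form with $\mathfrak h,\mathfrak h^*$ isotropic, $(\alpha,x)=\alpha(x)$, $(x,\alpha)=-(-1)^{\bar\alpha\bar x}\alpha(x)$, the commutative invariant $n$-ary superalgebra on $\mathfrak d=\mathfrak g\oplus\mathfrak h\oplus\mathfrak h^*$ (orthogonal sum of forms) with derived potential $\mu+\nu+\sum_{i=1}^{n+1}\psi_i$, $\psi_i\in S^i\mathfrak h^*\cdot S^{n-i+1}\mathfrak g$, is the generalized double extension of $\mathfrak g$ by $\mathfrak h$ via the $\psi_i$; it is called a double extension if $\psi_n=\psi_{n+1}=0$. *)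

From HB Require Import structures.
From mathcomp Require Import all_boot all_order all_algebra.
From mathcomp Require Import reals complex.
Set Implicit Arguments. Unset Strict Implicit. Unset Printing Implicit Defensive.
Import GRing.Theory.
Local Open Scope ring_scope.

Section NaryDefs.
Variables (K : fieldType) (n : nat).

Definition upd (V : Type) (f : 'I_n -> V) (i : 'I_n) (x : V) : 'I_n -> V :=
  fun j => if j == i then x else f j.

Definition swap (V : Type) (f : 'I_n -> V) (i j : 'I_n) : 'I_n -> V :=
  fun k => if k == i then f j else if k == j then f i else f k.

Definition multilinear (V W : lmodType K) (m : ('I_n -> V) -> W) :=
  forall f (i : 'I_n) (c : K) x y,
    m (upd f i (c *: x + y)) = c *: m (upd f i x) + m (upd f i y).

Definition skew (V W : lmodType K) (m : ('I_n -> V) -> W) :=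
  forall f (i j : 'I_n), i != j -> m (swap f i j) = - m f.

Definition sym_bilinear (V : lmodType K) (b : V -> V -> K) :=
  (forall x y, b x y = b y x) /\
  (forall x (c : K) y z, b x (c *: y + z) = c * b x y + b x z).

Definition nondegenerate (V : lmodType K) (b : V -> V -> K) :=
  forall x, (forall y, b x y = 0) -> x = 0.

Record nalg := NAlg {
  ncar : vectType K;
  nform : ncar -> ncar -> K;
  nbr : ('I_n -> ncar) -> ncar }.
Arguments ncar : clear implicits.
Arguments nform : clear implicits.
Arguments nbr : clear implicits.

Definition skew_inv_nalg (A : nalg) :=
  [/\ sym_bilinear (nform A), nondegenerate (nform A),
      multilinear (nbr A), skew (nbr A) &
      forall (f : 'I_n -> ncar A) (i : 'I_n) (a : ncar A),
        nform A a (nbr A f) = - nform A (f i) (nbr A (upd f i a))].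

Definition is_ideal (A : nalg) (I : {vspace ncar A}) :=
  forall (f : 'I_n -> ncar A) (i : 'I_n), f i \in I -> nbr A f \in I.

Definition proper_ideal (A : nalg) (I : {vspace ncar A}) :=
  [/\ is_ideal I, I != 0%VS & I != fullv].

Definition trivial_one_dim (A : nalg) :=
  \dim (fullv : {vspace ncar A}) = 1%N /\ forall f, nbr A f = 0.

Definition simple (A : nalg) :=
  ~ trivial_one_dim A /\ forall I : {vspace ncar A}, ~ proper_ideal I.

Definition nondeg_on (A : nalg) (I : {vspace ncar A}) :=
  forall x, x \in I -> (forall y, y \in I -> nform A x y = 0) -> x = 0.

Definition irreducible (A : nalg) :=
  ~ exists I J : {vspace ncar A},
      [/\ is_ideal I /\ is_ideal J, I != 0%VS /\ J != 0%VS,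
          directv (I + J), (I + J)%VS = fullv & nondeg_on I /\ nondeg_on J].

Definition maximal_ideal (A : nalg) (I : {vspace ncar A}) :=
  proper_ideal I /\
  forall J : {vspace ncar A}, proper_ideal J -> (I <= J)%VS -> J = I.

(* ---------- the double extension d = g (+) h (+) h^*, h = K e one-dim. odd ----
   An element of d is (a, (s, t)) = a + s e + t e^*, a in g.
   Form: orthogonal sum, h and h^* isotropic, (e, e^* ) = (e^*, e) = 1. *)
Definition dspace (G : vectType K) := (G * (K^o * K^o))%type.

Definition dext_form (G : vectType K) (bg : G -> G -> K) (x y : dspace G) : K :=
  bg x.1 y.1 + x.2.1 * y.2.2 + x.2.2 * y.2.1.

(* The derived potential mu + psi_1 (nu = 0, psi_i = 0 for i <> 1), written as
   the totally skew (n+1)-form  (x0, {x1,...,xn}) on d, through the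
   identification of S^{n+1} of a purely odd space with alternating forms via
   the invariant form.  mu corresponds to (a0, {a1..an}_g); psi_1 = e^* . phi,
   phi in S^n g, corresponds to the form eps /\ phi, eps = e-coefficient,
   i.e. sum_i (-1)^i s_i phi(a_0,..,^a_i,..,a_n), which by skewness of phi is
   s_0 phi(a_1..a_n) - sum_{i>=1} s_i phi(a_1,..,a_0 (at i),..,a_n). *)
Definition dext_pot (G : vectType K) (bg : G -> G -> K) (brg : ('I_n -> G) -> G)
    (phi : ('I_n -> G) -> K^o) (x0 : dspace G) (f : 'I_n -> dspace G) : K :=
  let a := fun i => (f i).1 in
  let s := fun i => (f i).2.1 in
  bg x0.1 (brg a) + x0.2.1 * phi a - \sum_(i < n) s i * phi (upd a i x0.1).

(* T : A -> d is an isomorphism of invariant n-ary algebras onto the algebra on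
   d whose bracket is determined (via the nondegenerate form) by dext_pot *)
Definition dext_iso (A : nalg) (G : vectType K) (bg : G -> G -> K)
    (brg : ('I_n -> G) -> G) (phi : ('I_n -> G) -> K^o) (T : ncar A -> dspace G) :=
  [/\ forall (c : K) x y, T (c *: x + y) = c *: T x + T y,
      bijective T,
      forall x y, dext_form bg (T x) (T y) = nform A x y &
      forall x0 (f : 'I_n -> ncar A),
        dext_form bg (T x0) (T (nbr A f)) = dext_pot bg brg phi (T x0) (T \o f)].

Definition corollary2_for :=
  forall (A : nalg) (I : {vspace ncar A}),
    (2 <= n)%N -> skew_inv_nalg A -> irreducible A -> ~ simple A ->
    maximal_ideal I -> (\dim I).+1 = \dim (fullv : {vspace ncar A}) ->
    exists (G : vectType K) (bg : G -> G -> K) (brg : ('I_n -> G) -> G)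
           (phi : ('I_n -> G) -> K^o),
      [/\ skew_inv_nalg (@NAlg G bg brg), multilinear phi, skew phi &
          exists T : ncar A -> dspace G, dext_iso bg brg phi T].

End NaryDefs.

(* Let I be a nonzero ideal of codimension one. Its orthogonal is a line K es. If es were
   not in I, then A = I (+) K es would split orthogonally into two nondegenerate ideals,
   against irreducibility; so es is isotropic and I = es^perp. Pick e with (es, e) = 1 and
   (e, e) = 0, and let g be the orthogonal of the hyperbolic plane spanned by e and es.
   Since n >= 2 and I has codimension one, every bracket lies in I, i.e. is orthogonal to
   es. Expanding (x0, {x1, ..., xn}) multilinearly along A = g (+) K e (+) K es, invariance
   kills every term with an es-component or with e in two slots; what remains is the
   potential of g plus e^* . phi, where phi (a1, ..., an) = (e, {a1, ..., an}). *)

From Pilot Require Import Defs.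
From HB Require Import structures.
From mathcomp Require Import all_boot all_order all_algebra.
From mathcomp Require Import reals complex.
From mathcomp Require Import ring zify.
From Stdlib Require Import Classical FunctionalExtensionality.
Import GRing.Theory Num.Theory.
Set Implicit Arguments. Unset Strict Implicit. Unset Printing Implicit Defensive.
Local Open Scope ring_scope.

Section Updates.
Variables (n : nat) (T : Type).
Implicit Types (f : 'I_n -> T) (i j : 'I_n).

Lemma upd_eq f i x : upd f i x i = x.
Proof. by rewrite /upd eqxx. Qed.

Lemma upd_id f i : upd f i (f i) = f.
Proof. by apply: functional_extensionality => j; rewrite /upd; case: eqP => // ->. Qed.

Lemma upd_upd f i x y : upd (upd f i x) i y = upd f i y.
Proof. by apply: functional_extensionality => j; rewrite /upd; case: eqP. Qed.

Lemma comp_upd (S : Type) (g : T -> S) f i x : g \o upd f i x = upd (g \o f) i (g x).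
Proof. by apply: functional_extensionality => j; rewrite /upd /=; case: eqP. Qed.

Lemma comp_swap (S : Type) (g : T -> S) f i j : g \o swap f i j = swap (g \o f) i j.
Proof.
by apply: functional_extensionality => k; rewrite /swap /=; case: eqP => //; case: eqP.
Qed.

Lemma swap_id f i j : f i = f j -> swap f i j = f.
Proof.
move=> fij; apply: functional_extensionality => k; rewrite /swap.
by case: eqP => [->|_] //; case: eqP => [->|_].
Qed.

Definition map_prefix (p : T -> T) f (k : nat) : 'I_n -> T :=
  fun j => if (j < k)%N then p (f j) else f j.

Lemma map_prefix0 p f : map_prefix p f 0 = f.
Proof. by apply: functional_extensionality => j; rewrite /map_prefix ltn0. Qed.

Lemma map_prefix_all p f : map_prefix p f n = p \o f.
Proof. by apply: functional_extensionality => j; rewrite /map_prefix ltn_ord. Qed.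

Lemma map_prefix_upd p f i : map_prefix p f i = upd (map_prefix p f i.+1) i (f i).
Proof.
apply: functional_extensionality => j; rewrite /map_prefix /upd ltnS.
have [->|ji] := eqVneq j i; first by rewrite ltnn.
by rewrite ltn_neqAle val_eqE ji.
Qed.

Lemma comp_map_prefix p f k :
  (forall x, p (p x) = p x) -> p \o map_prefix p f k = p \o f.
Proof.
move=> pK; apply: functional_extensionality => j; rewrite /map_prefix /=.
by case: ifP => // _; apply: pK.
Qed.

Lemma map_prefix_self p f i : map_prefix p f i.+1 i = p (f i).
Proof. by rewrite /map_prefix ltnSn. Qed.

End Updates.

Section Multilinear.
Variables (K : fieldType) (n : nat) (V W : lmodType K) (m : ('I_n -> V) -> W).
Hypothesis m_ml : multilinear m.

Lemma multilinearB f i x y : m (upd f i (x - y)) = m (upd f i x) - m (upd f i y).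
Proof. by rewrite addrC -scaleN1r m_ml scaleN1r addrC. Qed.

Lemma multilinear_comp (W' : lmodType K) (L : W -> W') :
  (forall c x y, L (c *: x + y) = c *: L x + L y) -> multilinear (fun f => L (m f)).
Proof. by move=> L_lin f i c x y; rewrite m_ml L_lin. Qed.

Lemma multilinear_telescope (p : V -> V) f :
  m f - m (p \o f) =
    \sum_(i < n) m (upd (map_prefix p f i.+1) i (f i - p (f i))).
Proof.
rewrite -{1}(map_prefix0 p f) -map_prefix_all -opprB.
rewrite -(telescope_sumr (fun k => m (map_prefix p f k))) // big_mkord -sumrN.
apply: eq_bigr => i _; rewrite opprB multilinearB.
by rewrite -map_prefix_upd -(map_prefix_self p) upd_id.
Qed.

Lemma skew_eq0 f i j : Defs.skew m -> (2%:R : K) != 0 -> i != j -> f i = f j -> m f = 0.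
Proof.
move=> m_skew two_neq0 ij fij; apply/eqP.
have : (2%:R : K) *: m f == 0.
  by rewrite scaler_nat mulr2n -{2}(swap_id fij) m_skew // subrr.
by rewrite scaler_eq0 (negbTE two_neq0).
Qed.

End Multilinear.

Section SymmetricBilinear.
Variables (K : fieldType) (V : lmodType K) (b : V -> V -> K).
Hypothesis b_sym : sym_bilinear b.

Lemma formC x y : b x y = b y x.
Proof. by case: b_sym. Qed.

Lemma formDZr x c y z : b x (c *: y + z) = c * b x y + b x z.
Proof. by case: b_sym. Qed.

Lemma form0r x : b x 0 = 0.
Proof. by have := formDZr x (-1) 0 0; rewrite scaler0 addr0 mulN1r addNr. Qed.

Lemma formDr x y z : b x (y + z) = b x y + b x z.
Proof. by have := formDZr x 1 y z; rewrite scale1r mul1r. Qed.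

Lemma formZr x c y : b x (c *: y) = c * b x y.
Proof. by rewrite -[c *: y]addr0 formDZr form0r addr0. Qed.

Lemma formBr x y z : b x (y - z) = b x y - b x z.
Proof. by rewrite formDr -scaleN1r formZr mulN1r. Qed.

Lemma formDl x y z : b (y + z) x = b y x + b z x.
Proof. by rewrite !(formC _ x) formDr. Qed.

Lemma formZl x c y : b (c *: y) x = c * b y x.
Proof. by rewrite !(formC _ x) formZr. Qed.

Lemma formBl x y z : b (y - z) x = b y x - b z x.
Proof. by rewrite !(formC _ x) formBr. Qed.

Lemma form_sumr x m (F : 'I_m -> V) : b x (\sum_(i < m) F i) = \sum_(i < m) b x (F i).
Proof. by elim/big_rec2: _ => [|i y1 y2 _ <-]; rewrite ?form0r ?formDr. Qed.

(* The partner is [e0 - (b e0 e0 / 2) u] for any [e0] with [b u e0 = 1]. *)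
Lemma isotropic_partner u : Defs.nondegenerate b -> (2%:R : K) != 0 ->
  u != 0 -> b u u = 0 -> exists e, b u e = 1 /\ b e e = 0.
Proof.
move=> b_nondeg two_neq0 u_neq0 uu.
have [y uy] : exists y, b u y != 0.
  apply: NNPP => no_y; apply: (negP u_neq0); apply/eqP/b_nondeg => y.
  by apply/eqP/negPn/negP => uy; apply: no_y; exists y.
have [e0 ue0] : exists e0, b u e0 = 1.
  by exists ((b u y)^-1 *: y); rewrite formZr mulVf.
exists (e0 - (b e0 e0 / 2%:R) *: u); split.
  by rewrite formBr formZr ue0 uu mulr0 subr0.
rewrite formBl !formBr !formZl !formZr uu (formC e0 u) ue0.
by field.
Qed.

End SymmetricBilinear.

Section VectorSpaces.
Variable K : fieldType.

Lemma linfunE_of (aT rT : vectType K) (f : aT -> rT) :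
  (forall c x y, f (c *: x + y) = c *: f x + f y) -> forall x, linfun f x = f x.
Proof.
move=> f_lin.
exact: (lfunE (HB.pack f (GRing.isLinear.Build K aT rT *:%R f f_lin) : {linear aT -> rT})).
Qed.

Lemma nontrivial_kernel (aT rT : vectType K) (f : aT -> rT) :
  (forall c x y, f (c *: x + y) = c *: f x + f y) -> (dim rT < dim aT)%N ->
  exists2 x, x != 0 & f x = 0.
Proof.
move=> f_lin lt_dim; have := limg_ker_dim (linfun f) fullv.
have : (\dim (linfun f @: fullv) <= dim rT)%N by rewrite -dimvf dimvS ?subvf.
rewrite dimvf => le_img eq_dim.
have : (0 < \dim (fullv :&: lker (linfun f)))%N by lia.
rewrite lt0n dimv_eq0 -vpick0 => ker_neq0.
exists (vpick (fullv :&: lker (linfun f))) => //.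
have /memv_capP[_] := memv_pick (fullv :&: lker (linfun f)).
by rewrite memv_ker linfunE_of // => /eqP.
Qed.

Lemma capv_line_eq0 (vT : vectType K) (U : {vspace vT}) v :
  v \notin U -> (U :&: <[v]> = 0)%VS.
Proof.
move=> vU; apply/eqP; rewrite -subv0; apply/subvP => y /memv_capP [yU /vlineP [k yk]].
rewrite memv0 yk; have [->|k0] := eqVneq k 0; first by rewrite scale0r.
by move: vU; rewrite -[v]scale1r -(mulVf k0) -scalerA -yk memvZ.
Qed.

Lemma addv_line_full (vT : vectType K) (U : {vspace vT}) v :
  (\dim U).+1 = \dim {:vT} -> v \notin U -> (U + <[v]> = fullv)%VS.
Proof.
move=> dimU vU; have v_neq0 : v != 0 by apply: contraNneq vU => ->; rewrite mem0v.
apply/eqP; rewrite eqEdim subvf /= dimv_disjoint_sum ?capv_line_eq0 //.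
by rewrite dim_vline v_neq0 addn1 dimU.
Qed.

End VectorSpaces.

Lemma orthogonal_nonzero (K : fieldType) (V : vectType K) (b : V -> V -> K)
    (U : {vspace V}) :
  sym_bilinear b -> (\dim U < \dim {:V})%N ->
  exists2 u, u != 0 & {in U, forall y, b u y = 0}.
Proof.
move=> b_sym lt_dim.
pose F x : 'rV[K]_(\dim U) := \row_j b x (vbasis U)`_j.
have F_lin c x y : F (c *: x + y) = c *: F x + F y.
  by apply/rowP => j; rewrite !mxE formC // formDZr // !(formC b_sym _ (vbasis U)`_j).
have [|u u_neq0 Fu] := nontrivial_kernel F_lin; first by rewrite dim_matrix mul1r -dimvf.
exists u => // y /coord_vbasis ->; rewrite form_sumr // big1 // => j _.
by move/rowP/(_ j): Fu; rewrite formZr // !mxE => ->; rewrite mulr0.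
Qed.

Section CodimOneIdeal.
Variables (K : fieldType) (n : nat) (V : vectType K) (br : ('I_n -> V) -> V).
Hypotheses (br_ml : multilinear br) (br_skew : Defs.skew br).
Hypotheses (two_neq0 : (2%:R : K) != 0) (n_ge2 : (2 <= n)%N).
Variable I : {vspace V}.
Hypotheses (I_ideal : forall f i, f i \in I -> br f \in I)
  (I_codim1 : (\dim I).+1 = \dim {:V}).

(* If no argument lies in [I], the second one is a multiple of the first modulo [I]. *)
Lemma codim1_ideal_bracket f : br f \in I.
Proof.
have [lt0 lt1] : (0 < n)%N /\ (1 < n)%N by lia.
pose i0 : 'I_n := Ordinal lt0; pose i1 : 'I_n := Ordinal lt1.
have [f0_in_I|f0_notin_I] := boolP (f i0 \in I); first exact: (I_ideal f0_in_I).
have /memv_addP[q qI [_ /vlineP[c ->] f1E]] : f i1 \in (I + <[f i0]>)%VS.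
  by rewrite addv_line_full ?memvf.
rewrite -(upd_id f i1) f1E addrC br_ml (skew_eq0 (i := i0) (j := i1) br_skew) //.
by rewrite scaler0 add0r (I_ideal (i := i1)) // upd_eq.
Qed.

End CodimOneIdeal.

Section InvariantAlgebra.
Variables (K : fieldType) (n : nat) (A : nalg K n).
Local Notation V := (ncar A).
Local Notation form := (@nform _ _ A).
Local Notation br := (@nbr _ _ A).
Hypotheses (form_sym : sym_bilinear form) (form_nondeg : Defs.nondegenerate form).
Hypotheses (br_ml : multilinear br) (br_skew : Defs.skew br).
Hypothesis br_inv : forall f i a, form a (br f) = - form (f i) (br (upd f i a)).

Variable I : {vspace V}.
Hypotheses (I_ideal : is_ideal I) (I_codim1 : (\dim I).+1 = \dim {:V}).

Section OrthogonalLine.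
Variable v : V.
Hypotheses (v_notin_I : v \notin I) (v_orth_I : {in I, forall y, form v y = 0}).

Lemma ideal_line_dec x : exists2 p, p \in I & exists c, x = p + c *: v.
Proof.
have /memv_addP[p pI [_ /vlineP[c ->] ->]] : x \in (I + <[v]>)%VS.
  by rewrite addv_line_full ?memvf.
by exists p => //; exists c.
Qed.

Lemma ideal_nondeg : nondeg_on I.
Proof.
move=> x xI x_orth; apply: form_nondeg => z.
have [p pI [c ->]] := ideal_line_dec z.
by rewrite formDr // formZr // x_orth // (formC form_sym x) v_orth_I // mulr0 addr0.
Qed.

Lemma orth_ideal_in_line y : {in I, forall z, form y z = 0} -> y \in <[v]>%VS.
Proof.
move=> y_orth; have [p pI [c yE]] := ideal_line_dec y.
suff p0 : p = 0 by rewrite yE p0 add0r memvZ ?memv_line.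
apply: ideal_nondeg => // z zI.
by rewrite -[p](addrK (c *: v)) -yE formBl // formZl // y_orth // v_orth_I // mulr0 subr0.
Qed.

Lemma line_ideal : is_ideal <[v]>%VS.
Proof.
move=> f i /vlineP[c fi]; apply: orth_ideal_in_line => y yI.
rewrite (formC form_sym) (br_inv f i) fi formZl // v_orth_I ?mulr0 ?oppr0 //.
by apply: (I_ideal (i := i)); rewrite upd_eq.
Qed.

Lemma line_nondeg : nondeg_on <[v]>%VS.
Proof.
have vv : form v v != 0.
  apply: contraNneq v_notin_I => vv; suff -> : v = 0 by rewrite mem0v.
  apply: form_nondeg => z; have [p pI [c ->]] := ideal_line_dec z.
  by rewrite formDr // formZr // vv v_orth_I // mulr0 addr0.
move=> x /vlineP[c ->] x_orth; have /eqP := x_orth v (memv_line v).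
by rewrite formZl // mulf_eq0 (negbTE vv) orbF => /eqP ->; rewrite scale0r.
Qed.

Lemma orth_line_reducible : I != 0%VS -> ~ irreducible A.
Proof.
move=> I_neq0; apply; exists I, <[v]>%VS; split.
- by split; [exact: I_ideal | exact: line_ideal].
- split=> //; rewrite -dimv_eq0 dim_vline.
  by have [v0|//] := eqVneq v 0; move: v_notin_I; rewrite v0 mem0v.
- by apply/directv_addP; apply: capv_line_eq0.
- exact: addv_line_full.
- by split; [exact: ideal_nondeg | exact: line_nondeg].
Qed.

End OrthogonalLine.

Lemma irreducible_orth_in_ideal u :
  irreducible A -> I != 0%VS -> {in I, forall y, form u y = 0} -> u \in I.
Proof.
move=> irr I_neq0 u_orth; apply/negPn/negP => u_notin_I.
exact: (orth_line_reducible u_notin_I u_orth I_neq0).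
Qed.

Hypothesis two_neq0 : (2%:R : K) != 0.

Section HyperbolicPair.
Variables es e : V.
Hypotheses (es_es : form es es = 0) (es_e : form es e = 1) (e_e : form e e = 0).
Hypothesis es_br : forall f, form es (br f) = 0.

Lemma e_es : form e es = 1.
Proof. by rewrite (formC form_sym). Qed.

Definition orth_proj x := x - (form es x *: e + form e x *: es).

Lemma sub_orth_proj x : x - orth_proj x = form es x *: e + form e x *: es.
Proof. exact: subKr. Qed.

Lemma orth_proj_dec x : x = orth_proj x + (form es x *: e + form e x *: es).
Proof. by rewrite subrK. Qed.

Lemma form_es_proj x : form es (orth_proj x) = 0.
Proof. by rewrite formBr // formDr // !formZr // es_e es_es mulr0 mulr1 addr0 subrr. Qed.

Lemma form_e_proj x : form e (orth_proj x) = 0.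
Proof. by rewrite formBr // formDr // !formZr // e_e e_es mulr0 mulr1 add0r subrr. Qed.

Lemma orth_proj_id x : form es x = 0 -> form e x = 0 -> orth_proj x = x.
Proof. by move=> es_x e_x; rewrite /orth_proj es_x e_x !scale0r addr0 subr0. Qed.

Lemma orth_projK x : orth_proj (orth_proj x) = orth_proj x.
Proof. by rewrite orth_proj_id ?form_es_proj ?form_e_proj. Qed.

Lemma orth_proj_lin c x y : orth_proj (c *: x + y) = c *: orth_proj x + orth_proj y.
Proof.
rewrite /orth_proj !formDZr // !scalerDl scalerBr scalerDr !scalerA.
by rewrite (addrACA ((_ * _) *: e)) opprD addrACA.
Qed.

Lemma orth_projN x : orth_proj (- x) = - orth_proj x.
Proof. by rewrite -!(linfunE_of orth_proj_lin) linearN. Qed.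

Lemma form_orth_proj u x :
  form es u = 0 -> form e u = 0 -> form u (orth_proj x) = form u x.
Proof.
move=> es_u e_u; rewrite formBr // formDr // !formZr // !(formC form_sym u).
by rewrite es_u e_u !mulr0 addr0 subr0.
Qed.

Lemma form_orth_hyp p q a b c d :
  form es p = 0 -> form e p = 0 -> form es q = 0 -> form e q = 0 ->
  form (p + (a *: e + b *: es)) (q + (c *: e + d *: es)) = form p q + (a * d + b * c).
Proof.
move=> es_p e_p es_q e_q.
rewrite !(formDl form_sym, formDr form_sym, formZl form_sym, formZr form_sym).
rewrite !(formC form_sym p) es_q e_q es_p e_p e_e e_es es_e es_es.
ring.
Qed.

Lemma form_dec x y : form x y =
  form (orth_proj x) (orth_proj y) + (form es x * form e y + form e x * form es y).
Proof.
by rewrite {1}(orth_proj_dec x) {1}(orth_proj_dec y) form_orth_hyp ?form_es_proj ?form_e_proj.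
Qed.

Lemma form_br_multilinear y : multilinear (fun f => form y (br f) : K^o).
Proof. exact: (multilinear_comp br_ml (L := form y : V -> K^o) (formDZr form_sym y)). Qed.

(* Invariance moves the argument out of the bracket; its [es]-part then dies by [es_br]. *)
Lemma form_br_hyp y g i s t :
  form y (br (upd g i (s *: e + t *: es))) = - (s * form e (br (upd g i y))).
Proof.
by rewrite (br_inv _ i y) upd_eq upd_upd formDl // !formZl // es_br mulr0 addr0.
Qed.

Lemma form_e_br_e g i : form e (br (upd g i e)) = 0.
Proof.
have := br_inv (upd g i e) i e; rewrite upd_eq upd_upd => /eqP.
by rewrite -addr_eq0 -mulr2n -mulr_natr mulf_eq0 (negbTE two_neq0) orbF => /eqP.
Qed.

Lemma form_e_br_proj f : form e (br f) = form e (br (orth_proj \o f)).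
Proof.
apply/eqP; rewrite -subr_eq0 (multilinear_telescope (form_br_multilinear e)).
apply/eqP/big1 => i _.
by rewrite sub_orth_proj form_br_hyp form_e_br_e mulr0 oppr0.
Qed.

Lemma form_br_expand y f :
  form y (br f) = form y (br (orth_proj \o f)) -
    \sum_(i < n) form es (f i) * form e (br (upd (orth_proj \o f) i (orth_proj y))).
Proof.
have /eqP := multilinear_telescope (form_br_multilinear y) orth_proj f.
rewrite subr_eq => /eqP ->; rewrite addrC -sumrN; congr (_ + _); apply: eq_bigr => i _.
by rewrite sub_orth_proj form_br_hyp form_e_br_proj comp_upd comp_map_prefix //; exact: orth_projK.
Qed.

Definition gspace : {vspace V} := limg (linfun orth_proj).
Local Notation G := (subvs_of gspace).

Lemma orth_proj_in_gspace x : orth_proj x \in gspace.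
Proof. by rewrite -(linfunE_of orth_proj_lin) memv_img ?memvf. Qed.

Lemma vsval_orth_proj x : vsval (vsproj gspace (orth_proj x)) = orth_proj x.
Proof. exact/vsprojK/orth_proj_in_gspace. Qed.

Lemma gspace_orth (u : G) : form es (vsval u) = 0 /\ form e (vsval u) = 0.
Proof.
case/memv_imgP: (subvsP u) => x _ ->.
by rewrite linfunE_of ?form_es_proj ?form_e_proj //; exact: orth_proj_lin.
Qed.

Lemma form_gspace_proj (u : G) x : form (vsval u) (orth_proj x) = form (vsval u) x.
Proof. by case: (gspace_orth u) => es_u e_u; rewrite form_orth_proj. Qed.

Lemma vsval_comp_proj (f : 'I_n -> V) :
  vsval \o (fun i => vsproj gspace (orth_proj (f i))) = orth_proj \o f.
Proof. by apply: functional_extensionality => i; rewrite /= vsval_orth_proj. Qed.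

(* [g] is the orthogonal complement of the hyperbolic plane spanned by [e] and [es]; in the
   double extension [e] spans [h] and [es] spans its dual, and [g_cocycle] is the [phi] of
   [psi_1 = e^* . phi]. *)
Definition g_form (u v : G) : K := form (vsval u) (vsval v).
Definition g_br (a : 'I_n -> G) : G := vsproj gspace (orth_proj (br (vsval \o a))).
Definition g_cocycle (a : 'I_n -> G) : K^o := form e (br (vsval \o a)).
Definition to_dext (x : V) : dspace G := (vsproj gspace (orth_proj x), (form es x, form e x)).

Lemma g_skew_inv : skew_inv_nalg (NAlg g_form g_br).
Proof.
split => /=.
- split; first by move=> u v; rewrite /g_form (formC form_sym).
  by move=> u c v w; rewrite /g_form linearP formDZr.
- move=> u u_orth; apply/val_inj/form_nondeg => y /=.
  by rewrite -form_gspace_proj -vsval_orth_proj; apply: u_orth.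
- by move=> f i c x y; rewrite /g_br !comp_upd linearP br_ml orth_proj_lin linearP.
- by move=> f i j ij; rewrite /g_br comp_swap br_skew // orth_projN linearN.
- move=> f i a; rewrite /g_form /g_br !vsval_orth_proj !form_gspace_proj comp_upd.
  exact: br_inv.
Qed.

Lemma g_cocycle_multilinear : multilinear g_cocycle.
Proof. by move=> f i c x y; rewrite /g_cocycle !comp_upd linearP br_ml formDZr. Qed.

Lemma g_cocycle_skew : Defs.skew g_cocycle.
Proof.
by move=> f i j ij; rewrite /g_cocycle comp_swap br_skew // -scaleN1r formZr // mulN1r.
Qed.

Lemma to_dext_form x y : dext_form g_form (to_dext x) (to_dext y) = form x y.
Proof. by rewrite /dext_form /g_form /= !vsval_orth_proj [RHS]form_dec addrA. Qed.

Lemma to_dext_bijective : bijective to_dext.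
Proof.
exists (fun p : dspace G => vsval p.1 + (p.2.1 *: e + p.2.2 *: es)).
  by move=> x; rewrite /= vsval_orth_proj -orth_proj_dec.
move=> [u [s t]] /=; have [es_u e_u] := gspace_orth u.
have es_x : form es (vsval u + (s *: e + t *: es)) = s.
  by rewrite formDr // formDr // !formZr // es_u es_e es_es mulr1 mulr0 addr0 add0r.
have e_x : form e (vsval u + (s *: e + t *: es)) = t.
  by rewrite formDr // formDr // !formZr // e_u e_e e_es mulr1 mulr0 add0r add0r.
by rewrite /to_dext es_x e_x /orth_proj es_x e_x addrK vsvalK.
Qed.

(* The bracket identity is [form_br_expand] paired with [x0], split along [form_dec]. *)
Lemma to_dext_iso : dext_iso g_form g_br g_cocycle to_dext.
Proof.
split; [|exact: to_dext_bijective|exact: to_dext_form|].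
  by move=> c x y; rewrite /to_dext orth_proj_lin linearP !formDZr.
move=> x0 f; rewrite to_dext_form /dext_pot /= /g_form /g_br /g_cocycle.
rewrite vsval_comp_proj !vsval_orth_proj.
under eq_bigr => i _ do rewrite comp_upd vsval_comp_proj vsval_orth_proj.
by rewrite (form_br_expand x0 f) (form_dec x0) es_br mulr0 addr0.
Qed.

Lemma hyperbolic_double_extension :
  exists (G : vectType K) (bg : G -> G -> K) (brg : ('I_n -> G) -> G)
         (phi : ('I_n -> G) -> K^o),
    [/\ skew_inv_nalg (NAlg bg brg), multilinear phi, Defs.skew phi &
        exists T : V -> dspace G, dext_iso bg brg phi T].
Proof.
exists G, g_form, g_br, g_cocycle; split.
- exact: g_skew_inv.
- exact: g_cocycle_multilinear.
- exact: g_cocycle_skew.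
- by exists to_dext; exact: to_dext_iso.
Qed.

End HyperbolicPair.

Lemma codim1_ideal_double_extension :
  (2 <= n)%N -> irreducible A -> I != 0%VS ->
  exists (G : vectType K) (bg : G -> G -> K) (brg : ('I_n -> G) -> G)
         (phi : ('I_n -> G) -> K^o),
    [/\ skew_inv_nalg (NAlg bg brg), multilinear phi, Defs.skew phi &
        exists T : V -> dspace G, dext_iso bg brg phi T].
Proof.
move=> n_ge2 irr I_neq0.
have [es es_neq0 es_orth] : exists2 es, es != 0 & {in I, forall y, form es y = 0}.
  by apply: orthogonal_nonzero => //; rewrite -I_codim1.
have es_I : es \in I by exact: irreducible_orth_in_ideal.
have [e [es_e e_e]] := isotropic_partner form_sym form_nondeg two_neq0 es_neq0 (es_orth _ es_I).
apply: (hyperbolic_double_extension (es_orth _ es_I) es_e e_e) => f.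
apply: es_orth; exact: (codim1_ideal_bracket br_ml br_skew two_neq0 n_ge2 I_ideal I_codim1).
Qed.

End InvariantAlgebra.

Lemma corollary2_numField (K : numFieldType) (n : nat) : corollary2_for K n.
Proof.
move=> A I n_ge2 [form_sym form_nondeg br_ml br_skew br_inv] irr _ [[I_ideal I_neq0 _] _] I_codim1.
have two_neq0 : (2%:R : K) != 0 by rewrite pnatr_eq0.
exact: (codim1_ideal_double_extension form_sym form_nondeg br_ml br_skew br_inv
  I_ideal I_codim1 two_neq0 n_ge2 irr I_neq0).
Qed.

Theorem corollary2 (R : realType) (n : nat) :
  corollary2_for R n /\ corollary2_for (R[i])%C n.
Proof. by split; apply: corollary2_numField. Qed.
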